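(* Let $\mathcal{C},\mathcal{D}$ be essentially small monoidal categories admitting pushouts such that $-\otimes_\mathcal{C}-$ and $-\otimes_\mathcal{D}-$ preserve pushouts and monomorphisms, and let $F:\mathcal{C}\to\mathcal{D}$ be a monoidal functor preserving pushouts and monomorphisms. Then $\overline{A}\mapsto\overline{F(A)}$ defines a morphism of trusses $\mathrm{K}_0^{\mathrm{heap}}(\mathcal{C})\to \mathrm{K}_0^{\mathrm{heap}}(\mathcal{D})$, where each Grothendieck heap carries the truss structure with multiplication $\overline{A}\,\overline{B}=\overline{A\otimes B}$.
   Context: A heap is a set $H$ with a ternary operation $[\_,\_,\_]:H^3\to H$ satisfying $[a,b,[c,d,e]]=[[a,b,c],d,e]$ and $[x,x,y]=y=[y,x,x]$. A truss is a heap with a multiplication satisfying $[wx,wy,wz]=w[x,y,z]$; a morphism of trusses is a heap morphism $\varphi$ with $\varphi(xy)=\varphi(x)\varphi(y)$. For an essentially small category $\mathcal{C}$, its Grothendieck heap $\mathrm{K}_0^{\mathrm{heap}}(\mathcal{C})$ is the heap generated by the isomorphism classes $\overline{X}$ of objects of $\mathcal{C}$, subject to the relations $[\overline{X},\overline{Y},\overline{Z}]=\overline{X\sqcup_Y Z}$ for every pushout square $X\leftarrow Y\rightarrow Z$ in $\mathcal{C}$ in which at least one of the two maps $Y\to X$, $Y\to Z$ is a monomorphism. A monoidal functor here means $F(\mathbb{1})\cong\mathbb{1}$ and $F(A\otimes B)\cong F(A)\otimes F(B)$. *)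

Set Implicit Arguments.
Unset Strict Implicit.

Record Category := {
  Obj : Type;
  Hom : Obj -> Obj -> Type;
  idm : forall A, Hom A A;
  comp : forall A B E, Hom B E -> Hom A B -> Hom A E;
  comp_idl : forall A B (f : Hom A B), comp (idm B) f = f;
  comp_idr : forall A B (f : Hom A B), comp f (idm A) = f;
  comp_assoc : forall A B E G (f : Hom E G) (g : Hom B E) (h : Hom A B),
      comp f (comp g h) = comp (comp f g) h
}.
Arguments Hom : clear implicits.
Arguments idm {c} A.
Arguments comp {c A B E} _ _.

Section Basic.
Variable C : Category.

Definition is_iso (A B : Obj C) : Prop :=
  exists (f : Hom C A B) (g : Hom C B A), comp g f = idm A /\ comp f g = idm B.

Definition mono {X Y : Obj C} (f : Hom C X Y) : Prop :=
  forall Z (g h : Hom C Z X), comp f g = comp f h -> g = h.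

Definition is_pushout {X Y Z P : Obj C} (f : Hom C Y X) (g : Hom C Y Z)
    (i : Hom C X P) (j : Hom C Z P) : Prop :=
  comp i f = comp j g /\
  forall Q (a : Hom C X Q) (b : Hom C Z Q), comp a f = comp b g ->
    exists u : Hom C P Q, (comp u i = a /\ comp u j = b) /\
      forall v : Hom C P Q, comp v i = a -> comp v j = b -> v = u.

Definition has_pushouts : Prop :=
  forall X Y Z (f : Hom C Y X) (g : Hom C Y Z),
    exists P (i : Hom C X P) (j : Hom C Z P), is_pushout f g i j.
End Basic.

Record Monoidal (C : Category) := {
  tens : Obj C -> Obj C -> Obj C;
  tensm : forall A A' B B', Hom C A A' -> Hom C B B' -> Hom C (tens A B) (tens A' B');
  tens_id : forall A B, tensm (idm A) (idm B) = idm (tens A B);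
  tens_comp : forall A A' A'' B B' B'' (f : Hom C A A') (f' : Hom C A' A'')
      (g : Hom C B B') (g' : Hom C B' B''),
      tensm (comp f' f) (comp g' g) = comp (tensm f' g') (tensm f g);
  munit : Obj C;
  alpha : forall A B D, Hom C (tens (tens A B) D) (tens A (tens B D));
  alpha_inv : forall A B D, Hom C (tens A (tens B D)) (tens (tens A B) D);
  alpha_inv_l : forall A B D, comp (alpha_inv A B D) (alpha A B D) = idm _;
  alpha_inv_r : forall A B D, comp (alpha A B D) (alpha_inv A B D) = idm _;
  alpha_nat : forall A A' B B' D D' (f : Hom C A A') (g : Hom C B B') (h : Hom C D D'),
      comp (alpha A' B' D') (tensm (tensm f g) h) = comp (tensm f (tensm g h)) (alpha A B D);
  lam : forall A, Hom C (tens munit A) A;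
  lam_inv : forall A, Hom C A (tens munit A);
  lam_inv_l : forall A, comp (lam_inv A) (lam A) = idm _;
  lam_inv_r : forall A, comp (lam A) (lam_inv A) = idm _;
  lam_nat : forall A A' (f : Hom C A A'), comp (lam A') (tensm (idm munit) f) = comp f (lam A);
  rho : forall A, Hom C (tens A munit) A;
  rho_inv : forall A, Hom C A (tens A munit);
  rho_inv_l : forall A, comp (rho_inv A) (rho A) = idm _;
  rho_inv_r : forall A, comp (rho A) (rho_inv A) = idm _;
  rho_nat : forall A A' (f : Hom C A A'), comp (rho A') (tensm f (idm munit)) = comp f (rho A);
  pentagon : forall A B D E,
      comp (alpha A B (tens D E)) (alpha (tens A B) D E) =
      comp (tensm (idm A) (alpha B D E))
           (comp (alpha A (tens B D) E) (tensm (alpha A B D) (idm E)));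
  triangle : forall A B,
      comp (tensm (idm A) (lam B)) (alpha A munit B) = tensm (rho A) (idm B)
}.
Arguments tens {C} m A B.
Arguments tensm {C} m {A A' B B'} f g.
Arguments munit {C} m.

Definition tensor_preserves_pushouts {C : Category} (M : Monoidal C) : Prop :=
  forall W X Y Z P (f : Hom C Y X) (g : Hom C Y Z) (i : Hom C X P) (j : Hom C Z P),
    is_pushout f g i j ->
    is_pushout (tensm M (idm W) f) (tensm M (idm W) g) (tensm M (idm W) i) (tensm M (idm W) j) /\
    is_pushout (tensm M f (idm W)) (tensm M g (idm W)) (tensm M i (idm W)) (tensm M j (idm W)).

Definition tensor_preserves_monos {C : Category} (M : Monoidal C) : Prop :=
  forall W X Y (f : Hom C X Y), mono f ->
    mono (tensm M (idm W) f) /\ mono (tensm M f (idm W)).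

Record Functor (C D : Category) := {
  fobj : Obj C -> Obj D;
  fmor : forall A B, Hom C A B -> Hom D (fobj A) (fobj B);
  fmor_id : forall A, fmor (idm A) = idm (fobj A);
  fmor_comp : forall A B E (f : Hom C B E) (g : Hom C A B),
      fmor (comp f g) = comp (fmor f) (fmor g)
}.
Arguments fobj {C D} f0 A.
Arguments fmor {C D} f0 {A B} f.

Definition preserves_pushouts {C D : Category} (F : Functor C D) : Prop :=
  forall X Y Z P (f : Hom C Y X) (g : Hom C Y Z) (i : Hom C X P) (j : Hom C Z P),
    is_pushout f g i j -> is_pushout (fmor F f) (fmor F g) (fmor F i) (fmor F j).

Definition preserves_monos {C D : Category} (F : Functor C D) : Prop :=
  forall X Y (f : Hom C X Y), mono f -> mono (fmor F f).

Definition monoidal_functor {C D : Category} (MC : Monoidal C) (MD : Monoidal D)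
    (F : Functor C D) : Prop :=
  is_iso (fobj F (munit MC)) (munit MD) /\
  forall A B, is_iso (fobj F (tens MC A B)) (tens MD (fobj F A) (fobj F B)).

(** Elements of the free "heap-term" algebra on the objects; the Grothendieck
    heap K0^heap(C) is [hterm (Obj C)] modulo the congruence [k0eq C]. *)
Inductive hterm (T : Type) : Type :=
| hgen : T -> hterm T
| hbr : hterm T -> hterm T -> hterm T -> hterm T.
Arguments hgen {T} _.
Arguments hbr {T} _ _ _.

Unset Implicit Arguments.
Inductive k0eq (C : Category) : hterm (Obj C) -> hterm (Obj C) -> Prop :=
| k0_refl a : k0eq C a a
| k0_sym a b : k0eq C a b -> k0eq C b a
| k0_trans a b c : k0eq C a b -> k0eq C b c -> k0eq C a c
| k0_cong a a' b b' c c' : k0eq C a a' -> k0eq C b b' -> k0eq C c c' ->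
    k0eq C (hbr a b c) (hbr a' b' c')
| k0_assoc a b c d e : k0eq C (hbr a b (hbr c d e)) (hbr (hbr a b c) d e)
| k0_idl x y : k0eq C (hbr x x y) y
| k0_idr x y : k0eq C (hbr y x x) y
(* generators are isomorphism classes *)
| k0_iso (X Y : Obj C) : is_iso X Y -> k0eq C (hgen X) (hgen Y)
(* [X, Y, Z] = X \sqcup_Y Z for pushout squares with a monic leg *)
| k0_pushout X Y Z P (f : Hom C Y X) (g : Hom C Y Z) (i : Hom C X P) (j : Hom C Z P) :
    is_pushout f g i j -> mono f \/ mono g ->
    k0eq C (hbr (hgen X) (hgen Y) (hgen Z)) (hgen P).
Set Implicit Arguments.

Fixpoint hmul_l {C : Category} (M : Monoidal C) (A : Obj C) (b : hterm (Obj C)) : hterm (Obj C) :=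
  match b with
  | hgen B => hgen (tens M A B)
  | hbr x y z => hbr (hmul_l M A x) (hmul_l M A y) (hmul_l M A z)
  end.

Fixpoint hmul {C : Category} (M : Monoidal C) (a b : hterm (Obj C)) : hterm (Obj C) :=
  match a with
  | hgen A => hmul_l M A b
  | hbr x y z => hbr (hmul M x b) (hmul M y b) (hmul M z b)
  end.

Fixpoint hmap {T U : Type} (f : T -> U) (a : hterm T) : hterm U :=
  match a with
  | hgen A => hgen (f A)
  | hbr x y z => hbr (hmap f x) (hmap f y) (hmap f z)
  end.

(** [phi] induces a morphism of trusses K0(C) -> K0(D): it is well defined on
    the quotient, preserves the heap bracket and the multiplication. *)
Definition k0_truss_morphism {C D : Category} (MC : Monoidal C) (MD : Monoidal D)
    (phi : hterm (Obj C) -> hterm (Obj D)) : Prop :=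
  (forall a b, k0eq C a b -> k0eq D (phi a) (phi b)) /\
  (forall a b c, k0eq D (phi (hbr a b c)) (hbr (phi a) (phi b) (phi c))) /\
  (forall a b, k0eq D (phi (hmul MC a b)) (hmul MD (phi a) (phi b))).


(* Every defining relation of the Grothendieck heap is sent to a defining
   relation: functors preserve isomorphisms, and F carries a pushout square
   with a monic leg to a pushout square with a monic leg.  Multiplicativity
   only has to be checked on generators, since both multiplications
   distribute over the bracket, and there it is the isomorphism
   F(A (x) B) ~ F(A) (x) F(B). *)

Lemma fobj_iso (C D : Category) (F : Functor C D) (X Y : Obj C) :
  is_iso X Y -> is_iso (fobj F X) (fobj F Y).
Proof.
  intros [f [g [gf fg]]].
  exists (fmor F f), (fmor F g).
  rewrite <- !fmor_comp, gf, fg, !fmor_id.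
  split; reflexivity.
Qed.

Lemma hmap_k0eq (C D : Category) (F : Functor C D) :
  preserves_pushouts F -> preserves_monos F ->
  forall a b, k0eq C a b -> k0eq D (hmap (fobj F) a) (hmap (fobj F) b).
Proof.
  intros pushoutF monoF a b ab.
  induction ab; simpl.
  - apply k0_refl.
  - apply k0_sym; assumption.
  - eapply k0_trans; eassumption.
  - apply k0_cong; assumption.
  - apply k0_assoc.
  - apply k0_idl.
  - apply k0_idr.
  - apply k0_iso, fobj_iso; assumption.
  - eapply k0_pushout.
    + apply pushoutF; eassumption.
    + destruct H0; [left | right]; apply monoF; assumption.
Qed.

Section Multiplicative.
Variables (C D : Category) (MC : Monoidal C) (MD : Monoidal D) (F : Functor C D).
Hypothesis tens_iso :
  forall A B, is_iso (fobj F (tens MC A B)) (tens MD (fobj F A) (fobj F B)).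

Lemma hmap_hmul_l (A : Obj C) (b : hterm (Obj C)) :
  k0eq D (hmap (fobj F) (hmul_l MC A b)) (hmul_l MD (fobj F A) (hmap (fobj F) b)).
Proof.
  induction b; simpl.
  - apply k0_iso, tens_iso.
  - apply k0_cong; assumption.
Qed.

Lemma hmap_hmul (a b : hterm (Obj C)) :
  k0eq D (hmap (fobj F) (hmul MC a b)) (hmul MD (hmap (fobj F) a) (hmap (fobj F) b)).
Proof.
  induction a; simpl.
  - apply hmap_hmul_l.
  - apply k0_cong; assumption.
Qed.

End Multiplicative.

Theorem lemma2p11 (C D : Category) (MC : Monoidal C) (MD : Monoidal D)
  (F : Functor C D) :
  has_pushouts C -> has_pushouts D ->
  tensor_preserves_pushouts MC -> tensor_preserves_monos MC ->
  tensor_preserves_pushouts MD -> tensor_preserves_monos MD ->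
  monoidal_functor MC MD F -> preserves_pushouts F -> preserves_monos F ->
  k0_truss_morphism MC MD (hmap (fobj F)).
Proof.
  (* The hypotheses on C and D make the truss multiplications well defined on
     the quotients; the morphism property, stated on representatives, does not
     need them, nor F(1) ~ 1. *)
  intros _ _ _ _ _ _ [_ tens_iso] pushoutF monoF.
  split; [| split].
  - apply hmap_k0eq; assumption.
  - intros a b c; apply k0_refl.
  - apply hmap_hmul; assumption.
Qed.
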